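(* Let $\mathcal{A}$ be a Banach algebra such that for every $a'''\in\mathcal{A}^{***}$ the mapping $a''\mapsto a''a'''$ from $\mathcal{A}^{**}$ into $\mathcal{A}^{***}$ is $\sigma(\mathcal{A}^{**},\mathcal{A}^* )$-to-$\sigma(\mathcal{A}^{***},\mathcal{A}^{**})$ continuous. If $\mathcal{A}^{**}$ is weakly amenable, then $\mathcal{A}$ is weakly amenable.
   Context: $\mathcal{A}^{**}$ carries the first Arens product: for $a,b\in\mathcal{A}$, $a'\in\mathcal{A}^*$, $a'',b''\in\mathcal{A}^{**}$, $\langle a'a,b\rangle=\langle a',ab\rangle$, $\langle b''a',a\rangle=\langle b'',a'a\rangle$, $\langle a''\cdot b'',a'\rangle=\langle a'',b''a'\rangle$. For $a'''\in\mathcal{A}^{***}$, $a''a'''\in\mathcal{A}^{***}$ is defined by $\langle a''a''',b''\rangle=\langle a''',b''\cdot a''\rangle$. A Banach algebra $B$ is weakly amenable if every bounded derivation $D:B\to B^*$ (with the dual bimodule structure on $B^*$) is inner, i.e. of the form $D(b)=b\phi-\phi b$ for some $\phi\in B^*$. *)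

From HB Require Import structures.
From mathcomp Require Import all_boot all_order all_algebra.
From mathcomp Require Import all_classical all_reals all_analysis.
From mathcomp Require Export complex.
Set Implicit Arguments. Unset Strict Implicit. Unset Printing Implicit Defensive.
Import Order.TTheory GRing.Theory Num.Theory.
Import numFieldNormedType.Exports.
Local Open Scope ring_scope.
Local Open Scope classical_set_scope.

Section Duals.
Variable K : numFieldType.

(* A (normed) vector space over K, presented by its carrier, its vector
   operations and the relation  snb x C  :<->  ||x|| <= C.  This presentation
   lets us iterate the dual-space construction (A, its dual, bidual, tridual). *)
Record space := Space {
  car :> Type;
  sadd : car -> car -> car;
  sscl : K -> car -> car;
  snb : car -> K -> Prop }.

Definition dualP (V : space) (f : V -> K) : Prop :=
  [/\ forall x y, f (sadd x y) = f x + f y,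
      forall k x, f (sscl k x) = k * f x &
      exists M : K, forall x C, snb x C -> `|f x| <= M * C].

Definition dual_car (V : space) := {f : V -> K | dualP f}.
Definition dval (V : space) (f : dual_car V) : V -> K := proj1_sig f.

Lemma dualP0 (V : space) : dualP (fun _ : V => 0).
Proof.
split => //; first by move=> *; rewrite addr0.
  by move=> *; rewrite mulr0.
by exists 0 => x C _; rewrite normr0 mul0r.
Qed.

Definition dzero (V : space) : dual_car V := exist _ _ (dualP0 V).

(* the functional f, as an element of V* (f is always a bounded linear
   functional where mkdual is used below; the default branch is never hit) *)
Definition mkdual (V : space) (f : V -> K) : dual_car V :=
  match pselect (dualP f) with
  | left p => exist _ f p
  | right _ => dzero V
  end.

Definition dual (V : space) : space :=
  @Space (dual_car V)
    (fun f g => mkdual (fun x => dval f x + dval g x))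
    (fun k f => mkdual (fun x => k * dval f x))
    (fun f C => forall x C', snb x C' -> `|dval f x| <= C * C').

Definition nspace (A : normedModType K) : space :=
  @Space A (fun x y => x + y) (fun k x => k *: x) (fun x C => `|x| <= C).

Definition banach_algebra_mul (A : normedModType K) (m : A -> A -> A) : Prop :=
  [/\ forall a b c, m a (m b c) = m (m a b) c,
      forall a b c, m (a + b) c = m a c + m b c,
      forall a b c, m a (b + c) = m a b + m a c,
      forall (k : K) a b, m (k *: a) b = k *: m a b /\ m a (k *: b) = k *: m a b &
      forall a b, `|m a b| <= `|a| * `|b| ].

Definition dact_l (B : space) (m : B -> B -> B) (b : B) (phi : dual B) : dual B :=
  mkdual (fun c => dval phi (m c b)).
Definition dact_r (B : space) (m : B -> B -> B) (phi : dual B) (b : B) : dual B :=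
  mkdual (fun c => dval phi (m b c)).
Definition dsub (V : space) (f g : dual V) : dual V :=
  mkdual (fun x => dval f x - dval g x).

(* First Arens product on A** :
   <a' a, b> = <a', a b>,  <b'' a', a> = <b'', a' a>,  <a''.b'', a'> = <a'', b'' a'> *)
Definition arens_aux (A : space) (m : A -> A -> A) (b'' : dual (dual A))
  (a' : dual A) : dual A :=
  mkdual (fun a => dval b'' (dact_r m a' a)).
Definition arens (A : space) (m : A -> A -> A) (a'' b'' : dual (dual A)) :
  dual (dual A) :=
  mkdual (fun a' => dval a'' (arens_aux m b'' a')).

Definition linear_map (V W : space) (T : V -> W) : Prop :=
  (forall x y, T (sadd x y) = sadd (T x) (T y)) /\
  (forall k x, T (sscl k x) = sscl k (T x)).
Definition bounded_map (V W : space) (T : V -> W) : Prop :=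
  exists M : K, forall x C, snb x C -> snb (T x) (M * C).
Definition is_derivation (B : space) (m : B -> B -> B) (D : B -> dual B) : Prop :=
  forall a b, D (m a b) = sadd (dact_l m a (D b)) (dact_r m (D a) b).

Definition weakly_amenable (B : space) (m : B -> B -> B) : Prop :=
  forall D : B -> dual B, linear_map D -> bounded_map D -> is_derivation m D ->
  exists phi : dual B, forall b, D b = dsub (dact_l m b phi) (dact_r m phi b).

Definition wstar_cvg (V : space) (F : set_system (dual V)) (x : dual V) : Prop :=
  forall v : V, (fun y : dual V => dval y v) @ F --> dval x v.

Definition wstar_continuous (V W : space) (T : dual V -> dual W) : Prop :=
  forall (F : set_system (dual V)) (x : dual V),
    Filter F -> wstar_cvg F x -> wstar_cvg (T @ F) (T x).

End Duals.

From Pilot Require Import Defs.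
From HB Require Import structures.
From mathcomp Require Import all_boot all_order all_algebra.
From mathcomp Require Import all_classical all_reals all_analysis.
From mathcomp Require Import complex ring.
From Stdlib Require List.
Import numFieldNormedType.Exports.
Set Implicit Arguments. Unset Strict Implicit. Unset Printing Implicit Defensive.
Import Order.TTheory GRing.Theory Num.Theory.
Local Open Scope ring_scope.

(* Let D : A -> A* be a bounded derivation. Its second adjoint
   D'' : A** -> A***, <D'' a'', c''> = <a'', c'' o D>, extends D and is a
   derivation for the first Arens product. The derivation identity holds on
   A x A because D is a derivation. It extends to A x A** because all its terms
   are then values of b'' at finitely many functionals, where b'' agrees with
   some element of A (Helly). It extends to A** x A** along the net of elements
   of A converging weak* to a'' (Goldstine): the only term that is not plainly
   weak*-continuous in a'' is the one of the module product a'' . D''(b''),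
   which is continuous by hypothesis. Weak amenability of A** then gives
   D'' = ad phi with phi in A***, and D is the inner derivation implemented by
   the restriction of phi to A. *)

Section DualSpace.
Variables (K : numFieldType) (V : Defs.space K).

Lemma mkdualE (f : V -> K) : dualP f -> dval (mkdual f) = f.
Proof. by move=> Pf; rewrite /mkdual; case: pselect => [//|/(_ Pf) []]. Qed.

Lemma dual_ext (f g : dual V) : (forall x, dval f x = dval g x) -> f = g.
Proof.
move: f g => [f Pf] [g Pg] /= fg.
have {fg} E : f = g by apply: funext.
by subst g; congr exist; exact: Prop_irrelevance.
Qed.

Lemma dvalD (f : dual V) x y : dval f (sadd x y) = dval f x + dval f y.
Proof. by case: f => ? []. Qed.

Lemma dvalZ (f : dual V) k x : dval f (sscl k x) = k * dval f x.
Proof. by case: f => ? []. Qed.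

Lemma dual_normed (f : dual V) : exists C, snb f C.
Proof. by case: f => ? []. Qed.

Lemma dualPD (f g : V -> K) : dualP f -> dualP g -> dualP (fun x => f x + g x).
Proof.
move=> [fD fZ [Mf fB]] [gD gZ [Mg gB]]; split.
- by move=> x y; rewrite fD gD addrACA.
- by move=> k x; rewrite fZ gZ mulrDr.
- exists (Mf + Mg) => x C xC; rewrite mulrDl.
  by apply: le_trans (ler_normD _ _) _; apply: lerD; [apply: fB|apply: gB].
Qed.

Lemma dualPZ k (f : V -> K) : dualP f -> dualP (fun x => k * f x).
Proof.
move=> [fD fZ [Mf fB]]; split.
- by move=> x y; rewrite fD mulrDr.
- by move=> l x; rewrite fZ mulrCA.
- exists (`|k| * Mf) => x C xC; rewrite normrM -mulrA.
  by apply: ler_wpM2l => //; apply: fB.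
Qed.

Lemma dual_saddE (f g : dual V) x :
  dval (@sadd _ (dual V) f g) x = dval f x + dval g x.
Proof. by rewrite /= mkdualE //; apply: dualPD; apply: proj2_sig. Qed.

Lemma dual_ssclE k (f : dual V) x :
  dval (@sscl _ (dual V) k f) x = k * dval f x.
Proof. by rewrite /= mkdualE //; apply: dualPZ; apply: proj2_sig. Qed.

Lemma dsubE (f g : dual V) x : dval (dsub f g) x = dval f x - dval g x.
Proof.
rewrite /dsub mkdualE //; have := dualPD (proj2_sig f) (dualPZ (-1) (proj2_sig g)).
by congr dualP; apply: funext => y; rewrite mulN1r.
Qed.

End DualSpace.

(* The Banach-space adjoint of [T : V -> W]. The module actions [dact_l],
   [dact_r] and both Arens constructions are adjoints of this form. *)
Definition adjoint (K : numFieldType) (V W : Defs.space K) (T : V -> W)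
  (f : dual W) : dual V := mkdual (fun x => dval f (T x)).

Section Adjoint.
Variables (K : numFieldType) (V W : Defs.space K) (T : V -> W).
Hypotheses (T_linear : linear_map T) (T_bounded : bounded_map T).

Lemma adjointE (f : dual W) x : dval (adjoint T f) x = dval f (T x).
Proof.
rewrite mkdualE //; case: T_linear => TD TZ; split.
- by move=> x1 x2; rewrite TD dvalD.
- by move=> k x1; rewrite TZ dvalZ.
- have [MT TB] := T_bounded; have [Mf fB] := dual_normed f.
  by exists (Mf * MT) => y C yC; rewrite -mulrA; apply: fB; apply: TB.
Qed.

Lemma adjoint_linear : linear_map (adjoint T).
Proof.
split=> [f g|k f]; apply: dual_ext => x.
  by rewrite adjointE !dual_saddE !adjointE.
by rewrite adjointE !dual_ssclE adjointE.
Qed.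

Lemma adjoint_bounded : bounded_map (adjoint T).
Proof.
have [MT TB] := T_bounded; exists MT => f C fC x C' xC'.
rewrite adjointE; apply: le_trans (fC _ _ (TB _ _ xC')) _.
by rewrite mulrCA mulrA.
Qed.

End Adjoint.

Definition bounded_bilinear (K : numFieldType) (B : Defs.space K)
  (m : B -> B -> B) (M : K) : Prop :=
  [/\ forall b, linear_map (m^~ b), forall a, linear_map (m a) &
      forall a b Ca Cb, snb a Ca -> snb b Cb -> snb (m a b) (M * Ca * Cb)].

Section Arens.
Variables (K : numFieldType) (B : Defs.space K) (m : B -> B -> B) (M : K).
Hypotheses (m_bilinear : bounded_bilinear m M)
           (B_normed : forall b : B, exists C, snb b C).

Let m_linearl b : linear_map (m^~ b). Proof. by case: m_bilinear. Qed.
Let m_linearr a : linear_map (m a). Proof. by case: m_bilinear. Qed.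
Let m_snb a b Ca Cb : snb a Ca -> snb b Cb -> snb (m a b) (M * Ca * Cb).
Proof. by case: m_bilinear => _ _; apply. Qed.

Let m_boundedl b : bounded_map (m^~ b).
Proof.
have [Cb bCb] := B_normed b; exists (M * Cb) => a C aC.
by rewrite mulrAC; apply: m_snb.
Qed.

Let m_boundedr a : bounded_map (m a).
Proof. by have [Ca aCa] := B_normed a; exists (M * Ca) => b C bC; apply: m_snb. Qed.

Lemma dact_lE (phi : dual B) b c : dval (dact_l m b phi) c = dval phi (m c b).
Proof. exact: (adjointE (m_linearl b) (m_boundedl b)). Qed.

Lemma dact_rE (phi : dual B) a c : dval (dact_r m phi a) c = dval phi (m a c).
Proof. exact: (adjointE (m_linearr a) (m_boundedr a)). Qed.

Let dact_r_linear (phi : dual B) : linear_map (dact_r m phi).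
Proof.
split=> [a1 a2|k a]; apply: dual_ext => c.
  by rewrite dual_saddE !dact_rE; case: (m_linearl c) => -> _; rewrite dvalD.
by rewrite dual_ssclE !dact_rE; case: (m_linearl c) => _ ->; rewrite dvalZ.
Qed.

Let dact_r_snb (phi : dual B) a Cp Ca :
  snb phi Cp -> snb a Ca -> snb (dact_r m phi a) (M * Cp * Ca).
Proof.
move=> phiCp aCa c Cc cCc; rewrite dact_rE.
have -> : M * Cp * Ca * Cc = Cp * (M * Ca * Cc) by ring.
exact: phiCp (m_snb aCa cCc).
Qed.

Let dact_r_bounded (phi : dual B) : bounded_map (dact_r m phi).
Proof.
have [Cp phiCp] := dual_normed phi; exists (M * Cp) => a C aC.
exact: dact_r_snb.
Qed.

Lemma arens_auxE (b'' : dual (dual B)) (a' : dual B) a :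
  dval (arens_aux m b'' a') a = dval b'' (dact_r m a' a).
Proof. exact: (adjointE (dact_r_linear a') (dact_r_bounded a')). Qed.

Let arens_aux_snb (b'' : dual (dual B)) (a' : dual B) Cb Cp :
  snb b'' Cb -> snb a' Cp -> snb (arens_aux m b'' a') (M * Cb * Cp).
Proof.
move=> b''Cb a'Cp a Ca aCa; rewrite arens_auxE.
have -> : M * Cb * Cp * Ca = Cb * (M * Cp * Ca) by ring.
exact: b''Cb (dact_r_snb a'Cp aCa).
Qed.

Let arens_aux_linear (b'' : dual (dual B)) : linear_map (arens_aux m b'').
Proof.
split=> [a1 a2|k a']; apply: dual_ext => a;
  have [dact_rD dact_rZ] := adjoint_linear (m_linearr a) (m_boundedr a).
  by rewrite dual_saddE !arens_auxE -dvalD; congr dval; exact: dact_rD.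
by rewrite dual_ssclE !arens_auxE -dvalZ; congr dval; exact: dact_rZ.
Qed.

Let arens_aux_bounded (b'' : dual (dual B)) : bounded_map (arens_aux m b'').
Proof.
have [Cb b''Cb] := dual_normed b''; exists (M * Cb) => a' C a'C.
exact: arens_aux_snb.
Qed.

Lemma arensE (a'' b'' : dual (dual B)) (a' : dual B) :
  dval (arens m a'' b'') a' = dval a'' (arens_aux m b'' a').
Proof. exact: (adjointE (arens_aux_linear b'') (arens_aux_bounded b'')). Qed.

Lemma arens_bounded_bilinear : bounded_bilinear (arens m) M.
Proof.
split.
- by move=> b''; exact: (adjoint_linear (arens_aux_linear b'') (arens_aux_bounded b'')).
- move=> a''; split=> [b1 b2|k b'']; apply: dual_ext => a';
    have [auxD auxZ] := adjoint_linear (dact_r_linear a') (dact_r_bounded a').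
    by rewrite dual_saddE !arensE -dvalD; congr dval; exact: auxD.
  by rewrite dual_ssclE !arensE -dvalZ; congr dval; exact: auxZ.
- move=> a'' b'' Ca Cb a''Ca b''Cb a' Cp a'Cp; rewrite arensE.
  have -> : M * Ca * Cb * Cp = Ca * (M * Cb * Cp) by ring.
  exact: a''Ca (arens_aux_snb b''Cb a'Cp).
Qed.

End Arens.

Lemma wstar_cvg_eventually (K : numFieldType) (V : Defs.space K)
  (F : set_system (dual V)) (x : dual V) (v : V) (r : K) :
  ProperFilter F -> wstar_cvg F x -> (\forall y \near F, dval y v = r) ->
  dval x v = r.
Proof.
move=> PF Fx Fr.
exact: (@cvg_unique _ (@norm_hausdorff _ K) _ (fmap_proper_filter _ PF) _ _
         (Fx v) (cvg_near_cst r Fr)).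
Qed.

Section NormedSpace.
Variables (K : numFieldType) (A : normedModType K).
Local Notation N := (nspace A).

Lemma nspace_normed (a : N) : exists C, snb a C.
Proof. by exists `|a|; apply: lexx. Qed.

Definition bidual_embed (a : N) : dual (dual N) := mkdual (fun a' : dual N => dval a' a).

Lemma bidual_embedE a (a' : dual N) : dval (bidual_embed a) a' = dval a' a.
Proof.
rewrite mkdualE //; split.
- by move=> f g; rewrite dual_saddE.
- by move=> k f; rewrite dual_ssclE.
- by exists `|a| => f C fC; rewrite mulrC; apply: fC; apply: lexx.
Qed.

Lemma bidual_embed_linear : linear_map (bidual_embed : N -> _).
Proof.
split=> [a b|k a]; apply: dual_ext => f.
  by rewrite dual_saddE !bidual_embedE dvalD.
by rewrite dual_ssclE !bidual_embedE dvalZ.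
Qed.

Lemma bidual_embed_bounded : bounded_map (bidual_embed : N -> _).
Proof.
by exists 1 => a C aC f C' fC'; rewrite bidual_embedE mul1r mulrC; apply: fC'.
Qed.

Definition common_kernel (L : seq (dual N)) (x : A) : Prop :=
  List.Forall (fun g : dual N => dval g x = 0) L.

Definition interpolates (a'' : dual (dual N)) (L : seq (dual N)) (a : A) : Prop :=
  List.Forall (fun g : dual N => dval g a = dval a'' g) L.

Lemma common_kernelD L x y :
  common_kernel L x -> common_kernel L y -> common_kernel L (x + y).
Proof.
move=> Lx Ly; apply: List.Forall_impl (List.Forall_and Lx Ly) => g [gx gy].
by rewrite (dvalD g x y) gx gy addr0.
Qed.

Lemma common_kernelZ L k x : common_kernel L x -> common_kernel L (k *: x).
Proof.
by apply: List.Forall_impl => g gx; rewrite (dvalZ g k x) gx mulr0.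
Qed.

Lemma kernel_vanishing_or_unit L (g : dual N) :
  (forall x, common_kernel L x -> dval g x = 0) \/
  exists2 x0, common_kernel L x0 & dval g x0 = 1.
Proof.
case: (pselect (exists x, common_kernel L x /\ dval g x != 0)) => [[x [Lx gx]]|].
  right; exists ((dval g x)^-1 *: x); first exact: common_kernelZ.
  by rewrite (dvalZ g) mulVf.
move=> nx; left=> x Lx; apply/eqP/negPn/negP => gx.
by apply: nx; exists x.
Qed.

(* A functional vanishing on the common kernel of [L] lies in the span of [L],
   so its values at [a] and at [a''] agree as soon as those on [L] do.
   Induction step: with [g x0 = 1], [f - f x0 * g] vanishes on the kernel of
   the tail of the list. *)
Lemma interpolates_kernel_vanishing L (f : dual N) a'' a :
  (forall x, common_kernel L x -> dval f x = 0) ->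
  interpolates a'' L a -> dval f a = dval a'' f.
Proof.
elim: L f => [|g L IHL] f fL.
  have f0 : f = @sscl _ (dual N) 0 f.
    by apply: dual_ext => x; rewrite dual_ssclE mul0r fL //; constructor.
  by rewrite f0 dvalZ mul0r dual_ssclE mul0r.
move=> /List.Forall_cons_iff[ga La].
have [gL|[x0 Lx0 gx0]] := kernel_vanishing_or_unit L g.
  by apply: IHL La => x Lx; apply: fL; constructor => //; apply: gL.
pose f' := @sadd _ (dual N) f (@sscl _ (dual N) (- dval f x0) g).
have f'E x : dval f' x = dval f x - dval f x0 * dval g x.
  by rewrite dual_saddE dual_ssclE mulNr.
suff : dval f' a = dval a'' f'.
  by rewrite f'E dvalD dvalZ -ga mulNr => /addIr.
apply: IHL La => x Lx; rewrite f'E.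
have Lx' : common_kernel (g :: L) (x + (- dval g x) *: x0).
  constructor; last by apply: common_kernelD => //; apply: common_kernelZ.
  by rewrite (dvalD g x) (dvalZ g) gx0 mulr1 subrr.
have := fL _ Lx'; rewrite (dvalD f x) (dvalZ f) => fx.
by rewrite [dval f x0 * _]mulrC -mulNr.
Qed.

(* Helly's lemma, without the norm estimate. *)
Lemma helly_interpolation a'' L : exists a, interpolates a'' L a.
Proof.
elim: L => [|g L [a0 La0]]; first by exists 0; constructor.
have [gL|[x0 Lx0 gx0]] := kernel_vanishing_or_unit L g.
  exists a0; constructor => //.
  exact: interpolates_kernel_vanishing La0.
exists (a0 + (dval a'' g - dval g a0) *: x0); constructor.
  by rewrite (dvalD g) (dvalZ g) gx0 mulr1 addrC subrK.
apply: List.Forall_impl (List.Forall_and La0 Lx0) => h [ha0 hx0].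
by rewrite (dvalD h) (dvalZ h) hx0 mulr0 addr0.
Qed.

(* The filter of the net of Goldstine's theorem: eventually, an element of the
   image of A agrees with [a''] on any prescribed finite set of functionals. *)
Definition goldstine_filter (a'' : dual (dual N)) : set_system (dual (dual N)) :=
  fun S => exists L, forall a, interpolates a'' L a -> S (bidual_embed a).

Lemma goldstine_filter_proper a'' : ProperFilter (goldstine_filter a'').
Proof.
have FF : Filter (goldstine_filter a'').
  split; first by exists [::].
    move=> P Q [L1 P1] [L2 Q2]; exists (L1 ++ L2)%list => a.
    by move/List.Forall_app => [aL1 aL2]; split; [apply: P1|apply: Q2].
  by move=> P Q PQ [L PL]; exists L => a aL; apply/PQ/PL.
split=> // -[L L0]; have [a aL] := helly_interpolation a'' L; exact: L0 a aL.
Qed.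

Lemma goldstine_cvg a'' : wstar_cvg (goldstine_filter a'') a''.
Proof.
move=> v; apply: (@cvg_near_cst _ _ _ _ _ (goldstine_filter_proper a'')).
by exists [:: v] => a /List.Forall_cons_iff[av _]; rewrite bidual_embedE.
Qed.

End NormedSpace.

Arguments bidual_embed {K A}.

Section BidualDerivation.
Variables (K : numFieldType) (A : normedModType K) (m : A -> A -> A).
Hypothesis m_banach : banach_algebra_mul m.
Local Notation N := (nspace A).
Local Notation arensN := (@arens _ N m).
Local Notation arens_auxN := (@arens_aux _ N m).
Local Notation dact_lN := (@dact_l _ N m).
Local Notation dact_rN := (@dact_r _ N m).

Lemma banach_algebra_mul_bilinear : bounded_bilinear (B := N) m 1.
Proof.
case: m_banach => _ mDl mDr mZ mN; split.
- by move=> b; split=> [x y|k x] /=; [exact: mDl | case: (mZ k x b)].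
- by move=> a; split=> [x y|k x] /=; [exact: mDr | case: (mZ k a x)].
- move=> a b Ca Cb /= aCa bCb; rewrite mul1r; apply: le_trans (mN a b) _.
  exact: ler_pM.
Qed.

Let m_bilinear := banach_algebra_mul_bilinear.
Let A_normed := @nspace_normed _ A.
Let arens_bilinear := arens_bounded_bilinear m_bilinear A_normed.
Let dact_lE_A := dact_lE m_bilinear A_normed.
Let dact_rE_A := dact_rE m_bilinear A_normed.
Let arens_auxE_A := arens_auxE m_bilinear A_normed.
Let arensE_A := arensE m_bilinear A_normed.
Let dact_lE_A2 := dact_lE arens_bilinear (@dual_normed _ _).
Let dact_rE_A2 := dact_rE arens_bilinear (@dual_normed _ _).

Lemma arens_aux_embed a (a' : dual N) :
  arens_auxN (bidual_embed a) a' = dact_lN a a'.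
Proof.
apply: dual_ext => c.
by rewrite arens_auxE_A bidual_embedE dact_rE_A dact_lE_A.
Qed.

Lemma arens_embed a b :
  arensN (bidual_embed a) (bidual_embed b) = bidual_embed (m a b).
Proof.
apply: dual_ext => a'.
by rewrite arensE_A !bidual_embedE arens_aux_embed dact_lE_A.
Qed.

Variable D : N -> dual N.
Hypotheses (D_linear : linear_map D) (D_bounded : bounded_map D)
           (D_derivation : is_derivation (B := N) m D).
Local Notation D' := (adjoint D).
Local Notation D'' := (adjoint D').

Let D'_linear := adjoint_linear D_linear D_bounded.
Let D'_bounded := adjoint_bounded D_linear D_bounded.
Let D'E := adjointE D_linear D_bounded.
Let D''E := adjointE D'_linear D'_bounded.

(* The derivation identity for [D''] at [(a'', b'')], evaluated at [c'']. *)
Definition second_adjoint_leibniz (a'' b'' : dual (dual N)) : Prop :=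
  forall c'', dval (arensN a'' b'') (D' c'') =
              dval b'' (D' (arensN c'' a'')) + dval a'' (D' (arensN b'' c'')).

Lemma second_adjoint_leibniz_embed a b :
  second_adjoint_leibniz (bidual_embed a) (bidual_embed b).
Proof.
move=> c''; rewrite arens_embed !bidual_embedE !D'E D_derivation dvalD.
rewrite !arensE_A arens_aux_embed bidual_embedE.
by rewrite (arens_auxE_A c'' (D a) b).
Qed.

Lemma arens_embed_left_eval a b'' c'' :
  dval (arensN (bidual_embed a) b'') (D' c'') = dval b'' (dact_rN (D' c'') a) /\
  dval (bidual_embed a) (D' (arensN b'' c'')) = dval b'' (arens_auxN c'' (D a)).
Proof.
by rewrite arensE_A !bidual_embedE arens_auxE_A D'E arensE_A.
Qed.

(* All three terms are values of [b''], so it suffices to replace [b''] by an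
   element of A taking the same three values. *)
Lemma second_adjoint_leibniz_embed_left a b'' :
  second_adjoint_leibniz (bidual_embed a) b''.
Proof.
move=> c''; have [lhs rhs] := arens_embed_left_eval a b'' c''; rewrite lhs rhs.
have [b] := helly_interpolation b''
  [:: dact_rN (D' c'') a; D' (arensN c'' (bidual_embed a)); arens_auxN c'' (D a)].
move=> /List.Forall_cons_iff[b1 /List.Forall_cons_iff[b2 /List.Forall_cons_iff[b3 _]]].
have := second_adjoint_leibniz_embed a b c''.
have [-> ->] := arens_embed_left_eval a (bidual_embed b) c''.
by rewrite !bidual_embedE b1 b2 b3.
Qed.

Hypothesis arens_wstar_continuous : forall a''' : dual (dual (dual N)),
  wstar_continuous (fun a'' : dual (dual N) => dact_l arensN a'' a''').

(* Along the Goldstine filter of [a''] the middle term is eventually given by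
   the previous lemma, and converges to its value at [a''] by continuity. *)
Lemma second_adjoint_leibniz_full a'' b'' : second_adjoint_leibniz a'' b''.
Proof.
move=> c''.
set r := dval a'' (arens_auxN b'' (D' c'')) - dval a'' (D' (arensN b'' c'')).
suff mid : dval b'' (D' (arensN c'' a'')) = r by rewrite arensE_A mid subrK.
rewrite -D''E -dact_lE_A2; have Ga := goldstine_filter_proper a''.
apply: (wstar_cvg_eventually
         (fmap_proper_filter (fun x => dact_l arensN x (D'' b'')) Ga)).
  exact: (@arens_wstar_continuous (D'' b'') _ _ filter_filter (@goldstine_cvg _ _ a'')).
exists [:: arens_auxN b'' (D' c''); D' (arensN b'' c'')].
move=> a /List.Forall_cons_iff[a1 /List.Forall_cons_iff[a2 _]] /=.
have := second_adjoint_leibniz_embed_left a b'' c''.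
rewrite /r dact_lE_A2 D''E arensE_A !bidual_embedE a1 a2 => ->.
by rewrite addrK.
Qed.

Lemma second_adjoint_derivation : is_derivation arensN D''.
Proof.
move=> a'' b''; apply: dual_ext => c''.
rewrite D''E dual_saddE dact_lE_A2 dact_rE_A2 !D''E.
exact: second_adjoint_leibniz_full.
Qed.

Lemma inner_of_second_adjoint_inner (phi : dual (dual (dual N))) :
  (forall b'', D'' b'' = dsub (dact_l arensN b'' phi) (dact_r arensN phi b'')) ->
  forall b, D b = dsub (dact_lN b (adjoint bidual_embed phi))
                       (dact_rN (adjoint bidual_embed phi) b).
Proof.
move=> D''phi b; apply: dual_ext => c.
have := congr1 (fun f => dval f (bidual_embed c)) (D''phi (bidual_embed b)).
rewrite /= D''E bidual_embedE D'E bidual_embedE => ->.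
rewrite !dsubE dact_lE_A2 dact_rE_A2 !arens_embed.
by rewrite dact_lE_A dact_rE_A !(adjointE (@bidual_embed_linear _ A) (@bidual_embed_bounded _ A)).
Qed.

End BidualDerivation.

Theorem theorem2p11 (R : realType) (A : completeNormedModType R[i])
  (m : A -> A -> A) :
  banach_algebra_mul m ->
  (forall a''' : dual (dual (dual (nspace A))),
     wstar_continuous (fun a'' : dual (dual (nspace A)) => dact_l (@arens _ (nspace A) m) a'' a''')) ->
  weakly_amenable (@arens _ (nspace A) m) ->
  @weakly_amenable _ (nspace A) m.
Proof.
move=> m_banach arens_cont bidual_wa D D_linear D_bounded D_derivation.
have D'_linear := adjoint_linear D_linear D_bounded.
have D'_bounded := adjoint_bounded D_linear D_bounded.
have [phi D''phi] := bidual_wa _ (adjoint_linear D'_linear D'_bounded)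
  (adjoint_bounded D'_linear D'_bounded)
  (second_adjoint_derivation m_banach D_linear D_bounded D_derivation arens_cont).
exists (adjoint bidual_embed phi).
exact: inner_of_second_adjoint_inner.
Qed.
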